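(* In the setting below (either $P=\mathfrak S$ or $P=\mathfrak A$, absolute error criterion), if $\{S_d\}$ is polynomially tractable with constants $C,p>0$, $q\ge0$, then $\lambda\in\ell_\tau$ for all $\tau>p/2$, and for every such $\tau$ and all $d\in\mathbb N$, $$\frac1{\lambda_{d,\psi(1)}^\tau}\sum_{k\in\nabla_d}\lambda_{d,k}^\tau\le(1+C)d^q+C^{2\tau/p}\zeta\Big(\frac{2\tau}p\Big)\Big(\frac{d^{2q/p}}{\lambda_{d,\psi(1)}}\Big)^\tau.$$
   Context: Setting: $S_1:H_1\to G_1$ is a compact linear operator between real Hilbert spaces ($H_1$ infinite-dimensional separable); $\lambda=(\lambda_m)_{m\in\mathbb N}$, $\lambda_1\ge\lambda_2\ge\dots\ge0$, are the eigenvalues of $S_1^\dagger S_1$. $S_d=S_1^{\otimes d}:H_1^{\otimes d}\to G_1^{\otimes d}$. For each $d$ fix $\emptyset\ne I_d=\{i_1<\dots<i_{a_d}\}\subset\{1,\dots,d\}$ ($I_1=\{1\}$), put $a_d=\#I_d$, $b_d=d-a_d$, and fix one type $P\in\{\mathfrak S,\mathfrak A\}$ for all $d$; the problem $\{S_d\}$ is the family of restrictions of $S_d$ to the $I_d$-symmetric subspace (if $P=\mathfrak S$) or $I_d$-antisymmetric subspace (if $P=\mathfrak A$) of $H_1^{\otimes d}$, i.e. the range of $\frac1{a_d!}\sum_{\pi}(\pm1)U_\pi$, the sum over permutations $\pi$ of $\{1,\dots,d\}$ fixing all points outside $I_d$, $U_\pi(f_1\otimes\cdots\otimes f_d)=f_{\pi(1)}\otimes\cdots\otimes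 f_{\pi(d)}$, sign $(-1)^{|\pi|}$ used for $\mathfrak A$. Let $\nabla_d=\{k\in\mathbb N^d:k_{i_1}\le\dots\le k_{i_{a_d}}\}$ for $P=\mathfrak S$ and with strict inequalities for $P=\mathfrak A$; $\lambda_{d,k}=\prod_{l=1}^d\lambda_{k_l}$; $\psi:\mathbb N\to\nabla_d$ a bijection with $\lambda_{d,\psi(1)}\ge\lambda_{d,\psi(2)}\ge\cdots$. These are exactly the eigenvalues of $S_d^\dagger S_d$ on the subspace, and the information complexity (absolute error) is $n(\epsilon,d)=\#\{k\in\nabla_d:\lambda_{d,k}>\epsilon^2\}$, the initial error $\epsilon^{\rm init}_d=\sqrt{\lambda_{d,\psi(1)}}$ (equal to $\lambda_1^{d/2}$ if $P=\mathfrak S$, and $\sqrt{\lambda_1^{b_d}\lambda_1\lambda_2\cdots\lambda_{a_d}}$ if $P=\mathfrak A$). Polynomially tractable: $\exists C,p>0,q\ge0$ with $n(\epsilon,d)\le C\epsilon^{-p}d^q$ for all $d\in\mathbb N,\epsilon\in(0,1]$; strongly polynomially tractable: this with $q=0$. Standing assumptions: $\lambda_2>0$ and $\epsilon_d^{\rm init}>0$ for all $d$. $\ell_\tau$: sequences with $\|\lambda\|_{\ell_\tau}^\tau=\sum_m\lambda_m^\tau<\infty$. $\zeta$ is the Riemann zeta function. *)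

From Stdlib Require Import Reals List Lia Lra.
Open Scope R_scope.

(* Type of the subspace: I_d-symmetric or I_d-antisymmetric. *)
Inductive ptype := PSym | PAnti.

(* Real power x^t for x >= 0 (with 0^t = 0, used only for t > 0). *)
Definition rpow (x t : R) : R := if Rlt_dec 0 x then Rpower x t else 0.

(* lambda_{d,k} = prod_l lambda_{k_l}; a multi-index k in N^d is a list of
   length d (entry l-1 is k_l); lam m is lambda_m for m >= 1. *)
Definition lam_dk (lam : nat -> R) (k : list nat) : R :=
  fold_right (fun m acc => lam m * acc) 1 k.

(* I d i  :<->  i \in I_d  (positions are 1..d). *)
Definition index_sets_ok (I : nat -> nat -> Prop) : Prop :=
  forall d, (1 <= d)%nat ->
    (forall i, I d i -> (1 <= i <= d)%nat) /\ (exists i, I d i).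

Definition in_nabla (P : ptype) (I : nat -> nat -> Prop) (d : nat) (k : list nat) : Prop :=
  length k = d /\ (forall m, In m k -> (1 <= m)%nat) /\
  forall i j, (1 <= i)%nat -> (i < j)%nat -> (j <= d)%nat -> I d i -> I d j ->
    match P with
    | PSym => (nth (i - 1) k 0 <= nth (j - 1) k 0)%nat
    | PAnti => (nth (i - 1) k 0 < nth (j - 1) k 0)%nat
    end.

(* #A <= B for a (possibly infinite) set A of multi-indices. *)
Definition card_le (A : list nat -> Prop) (B : R) : Prop :=
  forall F : list (list nat), NoDup F -> (forall k, In k F -> A k) -> INR (length F) <= B.

Definition info_complexity_le (P : ptype) (I : nat -> nat -> Prop) (lam : nat -> R)
  (eps : R) (d : nat) (B : R) : Prop :=
  card_le (fun k => in_nabla P I d k /\ lam_dk lam k > eps ^ 2) B.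

Definition poly_tractable_with (P : ptype) (I : nat -> nat -> Prop) (lam : nat -> R)
  (C p q : R) : Prop :=
  0 < C /\ 0 < p /\ 0 <= q /\
  forall (d : nat) (eps : R), (1 <= d)%nat -> 0 < eps <= 1 ->
    info_complexity_le P I lam eps d (C * Rpower eps (- p) * Rpower (INR d) q).

Definition sumR (l : list R) : R := fold_right Rplus 0 l.

Definition in_ell (lam : nat -> R) (tau : R) : Prop :=
  exists l, infinite_sum (fun n => rpow (lam (S n)) tau) l.

Definition is_zeta (s z : R) : Prop :=
  infinite_sum (fun n => Rpower (INR (S n)) (- s)) z.

From Stdlib Require Import Reals List Lia Lra.
Open Scope R_scope.

(* Polynomial tractability bounds the number of eigenvalues above [e^2] by
   [C d^q e^(-p)] for every [e] in (0,1].  The heart of the proof is a purely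
   real-variable estimate on a finite list of values [x_1, ..., x_N] in [0,M]
   whose counting function satisfies such a bound [A e^(-p)]:
     sum_i x_i^t <= A M^t + A^(2t/p) * zeta(2t/p).
   The values above 1 number at most [A] (take [e = 1]); for the values in
   [0,1], the [n]-th largest one is at most [(A/n)^(2/p)], which we obtain by
   repeatedly removing the minimum and letting [e^2] increase to it.
   The file first collects facts on powers, list sums and counting, then on
   partial zeta sums (bounded by [1 + 1/(s-1)] for [s > 1]), proves the
   estimate, and finally applies it: in dimension 1 with [M = lambda_1] it
   bounds the partial sums of [sum_m lambda_m^tau] ([lambda] in [l_tau]);
   in dimension [d] with [A = C d^q] and [M = lambda_{d,psi(1)}] it gives,
   after dividing by [lambda_{d,psi(1)}^tau], the stated inequality. *)

Lemma Rpower_pos x y : 0 < Rpower x y.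
Proof. apply exp_pos. Qed.

Lemma Rpower_base_1 y : Rpower 1 y = 1.
Proof. unfold Rpower. rewrite ln_1, Rmult_0_r. apply exp_0. Qed.

Lemma exp_le_mono x y : x <= y -> exp x <= exp y.
Proof. intros [H|H]; [left; apply exp_increasing, H | subst; lra]. Qed.

Lemma ln_le_mono x y : 0 < x -> x <= y -> ln x <= ln y.
Proof. intros Hx [H|H]; [left; apply ln_increasing; auto | subst; lra]. Qed.

Lemma rpow_nonneg x t : 0 <= rpow x t.
Proof. unfold rpow. destruct Rlt_dec; [left; apply Rpower_pos | lra]. Qed.

Lemma rpow_of_pos x t : 0 < x -> rpow x t = Rpower x t.
Proof. intros Hx. unfold rpow. destruct Rlt_dec; [reflexivity | lra]. Qed.

Lemma rpow_mono x y t : 0 < t -> x <= y -> rpow x t <= rpow y t.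
Proof.
  intros Ht Hxy. unfold rpow.
  destruct (Rlt_dec 0 x), (Rlt_dec 0 y); try lra.
  - apply Rle_Rpower_l; lra.
  - left; apply Rpower_pos.
Qed.

Lemma sumR_app l1 l2 : sumR (l1 ++ l2) = sumR l1 + sumR l2.
Proof. induction l1 as [|a l1 IH]; simpl; [lra | rewrite IH; lra]. Qed.

Lemma sumR_partition {A} (f : A -> bool) (g : A -> R) l :
  sumR (map g l) =
  sumR (map g (filter f l)) + sumR (map g (filter (fun x => negb (f x)) l)).
Proof. induction l as [|a l IH]; simpl; [lra|]. destruct (f a); simpl; rewrite IH; lra. Qed.

Lemma sumR_le_length_mul {A} (g : A -> R) b l :
  (forall x, In x l -> g x <= b) -> sumR (map g l) <= INR (length l) * b.
Proof.
  induction l as [|a l IH]; intros Hb; [simpl; lra|].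
  assert (g a <= b) by (apply Hb; left; reflexivity).
  assert (sumR (map g l) <= INR (length l) * b) by (apply IH; intros; apply Hb; right; auto).
  change (g a + sumR (map g l) <= INR (S (length l)) * b). rewrite S_INR. lra.
Qed.

Definition above (e x : R) : bool := if Rlt_dec e x then true else false.

Lemma above_spec e x : above e x = true <-> e < x.
Proof. unfold above. destruct Rlt_dec; split; auto; discriminate. Qed.

Definition count_above (e : R) (xs : list R) : nat := length (filter (above e) xs).

Lemma count_above_filter e h xs : (count_above e (filter h xs) <= count_above e xs)%nat.
Proof.
  unfold count_above. induction xs as [|a xs IH]; simpl; auto.
  destruct (h a); simpl; destruct (above e a); simpl; lia.
Qed.

Lemma min_exists (l : list R) : l <> nil -> exists m, In m l /\ forall x, In x l -> m <= x.
Proof.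
  induction l as [|a l IH]; intros Hn; [congruence|].
  destruct l as [|b l'].
  - exists a; split; [left; reflexivity|]. intros x [H|[]]; subst; lra.
  - destruct IH as [m [Hm Hmin]]; [congruence|].
    destruct (Rle_dec a m).
    + exists a; split; [now left|]. intros x [H|H]; [subst; lra | specialize (Hmin x H); lra].
    + exists m; split; [now right|]. intros x [H|H]; [subst; lra | auto].
Qed.

Fixpoint zeta_partial (s : R) (N : nat) : R :=
  match N with
  | O => 0
  | S n => zeta_partial s n + Rpower (INR (S n)) (- s)
  end.

Lemma ln_le_sub_1 x : 0 < x -> ln x <= x - 1.
Proof. intros Hx. pose proof (exp_ineq1_le (ln x)) as H. rewrite exp_ln in H; lra. Qed.

(* Comparison of one term with a telescoping difference:
   [a (N+1)^(-(a+1)) <= N^(-a) - (N+1)^(-a)], from [ln (1 + 1/N) >= 1/(N+1)]. *)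
Lemma zeta_term_telescoping (a N : R) : 0 < a -> 1 <= N ->
  a * Rpower (N + 1) (- (a + 1)) <= Rpower N (- a) - Rpower (N + 1) (- a).
Proof.
  intros Ha HN. unfold Rpower.
  set (x := ln (N + 1)). set (y := ln N).
  assert (Hxy : / (N + 1) <= x - y).
  { assert (H0 : 0 < N / (N + 1)) by (apply Rdiv_lt_0_compat; lra).
    pose proof (ln_le_sub_1 _ H0) as H.
    unfold Rdiv in H. rewrite ln_mult, ln_Rinv in H by (try apply Rinv_0_lt_compat; lra).
    assert (N * / (N + 1) - 1 = - / (N + 1)) by (field; lra). unfold x, y; lra. }
  assert (E1 : exp (- a * y) = exp (- a * x) * exp (a * (x - y))).
  { rewrite <- exp_plus. f_equal. ring. }
  assert (E2 : exp (- (a + 1) * x) = exp (- a * x) * / (N + 1)).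
  { replace (- (a + 1) * x) with (- a * x + - x) by ring. rewrite exp_plus. f_equal.
    unfold x. rewrite <- ln_Rinv by lra. apply exp_ln. apply Rinv_0_lt_compat; lra. }
  rewrite E1, E2.
  pose proof (exp_ineq1_le (a * (x - y))). pose proof (exp_pos (- a * x)).
  assert (a * / (N + 1) <= a * (x - y)) by (apply Rmult_le_compat_l; lra).
  assert (exp (- a * x) * (a * / (N + 1)) <= exp (- a * x) * (exp (a * (x - y)) - 1))
    by (apply Rmult_le_compat_l; lra).
  nra.
Qed.

(* For [s > 1] the partial zeta sums are bounded by [1 + 1/(s-1)]
   (the integral comparison, carried out by telescoping). *)
Lemma zeta_partial_bounded (s : R) (N : nat) : 1 < s -> zeta_partial s N <= 1 + 1 / (s - 1).
Proof.
  intros Hs.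
  assert (Htel : forall M, (1 <= M)%nat ->
            zeta_partial s M + Rpower (INR M) (- (s - 1)) / (s - 1) <= 1 + 1 / (s - 1)).
  { induction M as [|M IH]; intros HM; [lia|].
    destruct M as [|M].
    - cbn [zeta_partial]. change (INR 1) with 1. rewrite !Rpower_base_1. lra.
    - specialize (IH ltac:(lia)).
      assert (HN : 1 <= INR (S M)) by (rewrite S_INR; pose proof (pos_INR M); lra).
      pose proof (zeta_term_telescoping (s - 1) (INR (S M)) ltac:(lra) HN) as Z.
      replace (- (s - 1 + 1)) with (- s) in Z by ring.
      change (zeta_partial s (S (S M))) with
        (zeta_partial s (S M) + Rpower (INR (S (S M))) (- s)).
      rewrite (S_INR (S M)).
      assert (Hdiv : Rpower (INR (S M) + 1) (- s) <=
        (Rpower (INR (S M)) (- (s - 1)) - Rpower (INR (S M) + 1) (- (s - 1))) / (s - 1)).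
      { apply (Rmult_le_reg_l (s - 1)); [lra|].
        replace ((s - 1) * ((Rpower (INR (S M)) (- (s - 1))
                   - Rpower (INR (S M) + 1) (- (s - 1))) / (s - 1)))
          with (Rpower (INR (S M)) (- (s - 1)) - Rpower (INR (S M) + 1) (- (s - 1)))
          by (field; lra).
        exact Z. }
      unfold Rdiv in *. lra. }
  destruct N as [|N].
  - cbn [zeta_partial]. assert (0 < 1 / (s - 1)) by (apply Rdiv_lt_0_compat; lra). lra.
  - specialize (Htel (S N) ltac:(lia)).
    assert (0 < Rpower (INR (S N)) (- (s - 1)) / (s - 1))
      by (apply Rdiv_lt_0_compat; [apply Rpower_pos | lra]).
    lra.
Qed.

Lemma zeta_partial_le_zeta s z N : is_zeta s z -> zeta_partial s N <= z.
Proof.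
  intros Hz.
  set (u := sum_f_R0 (fun n => Rpower (INR (S n)) (- s))).
  assert (Hu : forall n, zeta_partial s (S n) = u n).
  { induction n as [|n IH]; unfold u in *; cbn [zeta_partial sum_f_R0] in *; [lra | rewrite IH; reflexivity]. }
  assert (Hg : Un_growing u).
  { intros n. unfold u. cbn [sum_f_R0]. pose proof (Rpower_pos (INR (S (S n))) (- s)). lra. }
  destruct N as [|N].
  - cbn [zeta_partial]. pose proof (growing_ineq u z Hg Hz 0%nat) as H0.
    unfold u in H0. cbn [sum_f_R0] in H0. pose proof (Rpower_pos (INR 1) (- s)). lra.
  - rewrite Hu. exact (growing_ineq u z Hg Hz N).
Qed.

(* If at least [N] values exceed [e^2] whenever [e^2 < m], then letting
   [e^2] increase to [m] gives [N m^(p/2) <= A], in logarithmic form. *)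
Lemma threshold_bound (A p m N : R) : 0 < A -> 0 < p -> 0 < m <= 1 -> 0 < N ->
  (forall e, 0 < e <= 1 -> e ^ 2 < m -> N <= A * Rpower e (- p)) ->
  ln N + (p / 2) * ln m <= ln A.
Proof.
  intros HA Hp Hm HN Hcount.
  destruct (Rle_dec (ln N + (p / 2) * ln m) (ln A)) as [|Hc]; [assumption | exfalso].
  set (gap := ln N + p / 2 * ln m - ln A).
  assert (Hgap : 0 < gap / (2 * p)) by (apply Rdiv_lt_0_compat; unfold gap; lra).
  assert (Hlm : ln m <= 0) by (rewrite <- ln_1; apply ln_le_mono; lra).
  set (e := exp (ln m / 2 - gap / (2 * p))).
  assert (He1 : e <= 1) by (unfold e; rewrite <- exp_0; apply exp_le_mono; lra).
  assert (He2 : e ^ 2 < m).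
  { unfold e. rewrite <- (exp_ln m) at 2 by lra. simpl. rewrite Rmult_1_r, <- exp_plus.
    apply exp_increasing. lra. }
  specialize (Hcount e (conj (exp_pos _) He1) He2).
  apply ln_le_mono in Hcount; [|lra].
  unfold Rpower, e in Hcount.
  rewrite ln_mult, !ln_exp in Hcount by (try apply exp_pos; lra).
  replace (- p * (ln m / 2 - gap / (2 * p))) with (- (p / 2) * ln m + gap / 2) in Hcount
    by (field; lra).
  unfold gap in Hcount. lra.
Qed.

Lemma min_value_bound (A p t m : R) (xs : list R) : 0 < A -> 0 < p -> 0 < t ->
  In m xs -> m <= 1 -> (forall x, In x xs -> m <= x) ->
  (forall e, 0 < e <= 1 -> INR (count_above (e ^ 2) xs) <= A * Rpower e (- p)) ->
  rpow m t <= Rpower A (2 * t / p) * Rpower (INR (length xs)) (- (2 * t / p)).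
Proof.
  intros HA Hp Ht Hm Hm1 Hmin Hcount.
  assert (HN : 0 < INR (length xs)).
  { apply lt_0_INR. destruct xs; [contradiction | simpl; lia]. }
  destruct (Rle_lt_dec m 0) as [Hm0 | Hm0].
  { unfold rpow. destruct Rlt_dec; [lra|].
    left. apply Rmult_lt_0_compat; apply Rpower_pos. }
  assert (Hlog : ln (INR (length xs)) + (p / 2) * ln m <= ln A).
  { apply threshold_bound; [exact HA | exact Hp | lra | exact HN |].
    intros e He He2. rewrite <- (Hcount e He). right. unfold count_above.
    rewrite (filter_ext_in (above (e ^ 2)) (fun _ => true)), filter_true; [reflexivity|].
    intros x Hx. apply above_spec. specialize (Hmin x Hx). lra. }
  rewrite rpow_of_pos by lra. unfold Rpower. rewrite <- exp_plus. apply exp_le_mono.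
  replace (2 * t / p * ln A + - (2 * t / p) * ln (INR (length xs)))
    with (t * ((2 / p) * (ln A - ln (INR (length xs))))) by (field; lra).
  apply Rmult_le_compat_l; [lra|].
  apply (Rmult_le_reg_l (p / 2)); [lra|].
  replace (p / 2 * (2 / p * (ln A - ln (INR (length xs))))) with (ln A - ln (INR (length xs)))
    by (field; lra).
  lra.
Qed.

(* Values in [0,1]: removing the minimum repeatedly, the [n]-th smallest
   contributes at most [A^s n^(-s)], [s = 2t/p], whence a zeta partial sum. *)
Lemma sum_small_values_bound (A p t : R) (xs : list R) : 0 < A -> 0 < p -> 0 < t ->
  (forall x, In x xs -> 0 <= x <= 1) ->
  (forall e, 0 < e <= 1 -> INR (count_above (e ^ 2) xs) <= A * Rpower e (- p)) ->
  sumR (map (fun x => rpow x t) xs) <= Rpower A (2 * t / p) * zeta_partial (2 * t / p) (length xs).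
Proof.
  intros HA Hp Ht. remember (length xs) as n eqn:Hn. revert xs Hn.
  induction n as [|n IH]; intros xs Hn H01 Hcount.
  - destruct xs; [simpl; lra | discriminate].
  - destruct (min_exists xs) as [m [Hm Hmin]]; [intros ->; discriminate|].
    assert (Hterm := min_value_bound A p t m xs HA Hp Ht Hm (proj2 (H01 m Hm)) Hmin Hcount).
    destruct (in_split m xs Hm) as [l1 [l2 ->]].
    assert (Hrest : sumR (map (fun x => rpow x t) (l1 ++ l2)) <=
                    Rpower A (2 * t / p) * zeta_partial (2 * t / p) n).
    { apply IH.
      - rewrite length_app in Hn |- *. simpl in Hn. lia.
      - intros x Hx. apply H01. apply in_app_or in Hx. apply in_or_app. simpl. tauto.
      - intros e He. rewrite <- (Hcount e He). apply le_INR. unfold count_above.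
        rewrite !filter_app, !length_app. cbn [filter]. destruct (above (e ^ 2) m); simpl; lia. }
    rewrite <- Hn in Hterm. rewrite map_app, sumR_app in Hrest |- *. cbn [map zeta_partial].
    change (sumR (?a :: ?l)) with (a + sumR l). lra.
Qed.

(* General values in [0,M]: those above 1 are at most [A] in number (take
   [e = 1]) and each contributes at most [M^t]; the others are handled above. *)
Lemma sum_values_bound (A p t M Z : R) (xs : list R) : 0 < A -> 0 < p -> 0 < t ->
  (forall N, zeta_partial (2 * t / p) N <= Z) ->
  (forall x, In x xs -> 0 <= x <= M) ->
  (forall e, 0 < e <= 1 -> INR (count_above (e ^ 2) xs) <= A * Rpower e (- p)) ->
  sumR (map (fun x => rpow x t) xs)
  <= A * rpow M t + Rpower A (2 * t / p) * Z.
Proof.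
  intros HA Hp Ht HZ HM Hcount.
  rewrite (sumR_partition (above 1)). apply Rplus_le_compat.
  - eapply Rle_trans; [apply (sumR_le_length_mul _ (rpow M t)) |].
    + intros x Hx. apply filter_In in Hx as [Hx _]. apply rpow_mono; [lra | apply HM, Hx].
    + apply Rmult_le_compat_r; [apply rpow_nonneg|].
      specialize (Hcount 1 ltac:(lra)). rewrite pow1, Rpower_base_1, Rmult_1_r in Hcount.
      exact Hcount.
  - eapply Rle_trans; [apply (sum_small_values_bound A p t); auto |].
    + intros x Hx. apply filter_In in Hx as [Hx Hb]. split; [apply HM, Hx|].
      destruct (above 1 x) eqn:E; [discriminate|].
      destruct (Rle_dec x 1) as [|Hx1]; [assumption|].
      apply Rnot_le_lt, above_spec in Hx1. congruence.
    + intros e He. rewrite <- (Hcount e He). apply le_INR, count_above_filter.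
    + apply Rmult_le_compat_l; [left; apply Rpower_pos|].
      apply HZ.
Qed.

Lemma lam_dk_nonneg lam k : (forall m, (1 <= m)%nat -> 0 <= lam m) ->
  (forall m, In m k -> (1 <= m)%nat) -> 0 <= lam_dk lam k.
Proof.
  intros Hnonneg. induction k as [|a k IH]; simpl; intros Hk; [lra|].
  apply Rmult_le_pos; auto.
Qed.

Lemma tractability_count P I lam C p q d (F : list (list nat)) e :
  poly_tractable_with P I lam C p q -> (1 <= d)%nat -> NoDup F ->
  (forall k, In k F -> in_nabla P I d k) -> 0 < e <= 1 ->
  INR (count_above (e ^ 2) (map (lam_dk lam) F)) <= (C * Rpower (INR d) q) * Rpower e (- p).
Proof.
  intros (_ & _ & _ & Htract) Hd HF HFn He.
  unfold count_above. rewrite filter_map_swap, length_map.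
  replace (C * Rpower (INR d) q * Rpower e (- p)) with (C * Rpower e (- p) * Rpower (INR d) q)
    by ring.
  apply (Htract d e Hd He); [apply NoDup_filter, HF |].
  intros k Hk. apply filter_In in Hk as [Hk Habove].
  split; [apply HFn, Hk | apply above_spec, Habove].
Qed.

Lemma singleton_in_nabla1 P I m : (1 <= m)%nat -> in_nabla P I 1 (m :: nil).
Proof.
  intros Hm. split; [reflexivity | split].
  - intros x [<- | []]; exact Hm.
  - intros i j Hi Hij Hj. lia.
Qed.

(* First claim: the partial sums of [sum_m lambda_m^tau] are bounded, by the
   estimate above applied in dimension [d = 1] (with [M = lambda_1] and the
   bound [1 + 1/(s-1)] on zeta partial sums), hence converge. *)
Lemma eigenvalues_in_ell P I lam C p q tau :
  (forall m, (1 <= m)%nat -> 0 <= lam m) ->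
  (forall m, (1 <= m)%nat -> lam (S m) <= lam m) ->
  poly_tractable_with P I lam C p q -> p / 2 < tau -> in_ell lam tau.
Proof.
  intros Hnonneg Hdecr Htract Htau.
  pose proof Htract as (HC & Hp & _).
  set (s := 2 * tau / p).
  assert (Hs : 1 < s).
  { unfold s. apply (Rmult_lt_reg_r p); [lra|]. unfold Rdiv.
    rewrite Rmult_assoc, Rinv_l by lra. lra. }
  assert (Hle1 : forall n, lam (S n) <= lam 1%nat).
  { induction n as [|n IH]; [lra|]. specialize (Hdecr (S n) ltac:(lia)). lra. }
  set (u := sum_f_R0 (fun n => rpow (lam (S n)) tau)).
  assert (Hu : forall N, u N = sumR (map (fun x => rpow x tau)
                                  (map (lam_dk lam) (map (fun n => S n :: nil) (seq 0 (S N)))))).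
  { intros N. rewrite !map_map. unfold u. induction N as [|N IH].
    - simpl. rewrite Rmult_1_r. lra.
    - rewrite seq_S, map_app, sumR_app, <- IH. cbn [sum_f_R0]. simpl. rewrite Rmult_1_r. lra. }
  set (A := C * Rpower (INR 1) q).
  assert (HA : 0 < A) by (apply Rmult_lt_0_compat; [exact HC | apply Rpower_pos]).
  assert (Hbound : forall N, u N <= A * rpow (lam 1%nat) tau + Rpower A s * (1 + 1 / (s - 1))).
  { intros N. rewrite Hu. apply sum_values_bound; [exact HA | exact Hp | lra | | |].
    - intros M. apply zeta_partial_bounded, Hs.
    - intros x Hx. apply in_map_iff in Hx as [k [<- Hk]].
      apply in_map_iff in Hk as [n [<- _]]. simpl. rewrite Rmult_1_r.
      split; [apply Hnonneg; lia | apply Hle1].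
    - intros e He. apply (tractability_count P I); auto.
      + apply NoDup_map_NoDup_ForallPairs; [|apply seq_NoDup].
        intros a b _ _ Hab. injection Hab; auto.
      + intros k Hk. apply in_map_iff in Hk as [n [<- _]]. apply singleton_in_nabla1; lia. }
  assert (Hgrowing : Un_growing u).
  { intros n. unfold u. cbn [sum_f_R0]. pose proof (rpow_nonneg (lam (S (S n))) tau). lra. }
  destruct (growing_cv u Hgrowing) as [l Hl].
  - exists (A * rpow (lam 1%nat) tau + Rpower A s * (1 + 1 / (s - 1))).
    intros x [N ->]. apply Hbound.
  - exists l. exact Hl.
Qed.

(* Second claim: with [A = C d^q] and [L = lambda_{d,psi(1)}^tau], the
   estimate gives [sum_k lambda_{d,k}^tau <= A L + A^s zeta(s)], [s = 2tau/p];
   dividing by [L] and using [A^s / L = C^s (d^(2q/p) / lambda_{d,psi(1)})^tau]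
   yields the stated bound. *)
Lemma normalized_sum_bound P I lam C p q tau d kmax z (F : list (list nat)) :
  (forall m, (1 <= m)%nat -> 0 <= lam m) ->
  poly_tractable_with P I lam C p q -> p / 2 < tau -> (1 <= d)%nat ->
  0 < lam_dk lam kmax ->
  (forall k, in_nabla P I d k -> lam_dk lam k <= lam_dk lam kmax) ->
  is_zeta (2 * tau / p) z ->
  NoDup F -> (forall k, In k F -> in_nabla P I d k) ->
  / rpow (lam_dk lam kmax) tau * sumR (map (fun k => rpow (lam_dk lam k) tau) F)
  <= (1 + C) * Rpower (INR d) q
     + Rpower C (2 * tau / p) * z * rpow (Rpower (INR d) (2 * q / p) / lam_dk lam kmax) tau.
Proof.
  intros Hnonneg Htract Htau Hd Hlm Hmax Hz HF HFn.
  pose proof Htract as (HC & Hp & _).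
  set (s := 2 * tau / p).
  set (Dq := Rpower (INR d) q). set (A := C * Dq). set (L := rpow (lam_dk lam kmax) tau).
  assert (HDq : 0 < Dq) by apply Rpower_pos.
  assert (HA : 0 < A) by (apply Rmult_lt_0_compat; lra).
  assert (HL : 0 < L) by (unfold L; rewrite rpow_of_pos by lra; apply Rpower_pos).
  assert (Hsum : sumR (map (fun k => rpow (lam_dk lam k) tau) F) <= A * L + Rpower A s * z).
  { rewrite <- (map_map (lam_dk lam) (fun x => rpow x tau)).
    apply sum_values_bound; [exact HA | exact Hp | lra | | |].
    - intros N. apply zeta_partial_le_zeta, Hz.
    - intros x Hx. apply in_map_iff in Hx as [k [<- Hk]]. split.
      + apply lam_dk_nonneg; [exact Hnonneg | apply (HFn k Hk)].
      + apply Hmax, HFn, Hk.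
    - intros e He. apply (tractability_count P I); auto. }
  assert (HAs : Rpower A s = Rpower C s * Rpower (INR d) (q * s)).
  { unfold A, Dq. rewrite <- Rpower_mult_distr, Rpower_mult by (try apply Rpower_pos; lra).
    reflexivity. }
  assert (Hratio : rpow (Rpower (INR d) (2 * q / p) / lam_dk lam kmax) tau
                   = Rpower (INR d) (q * s) * / L).
  { assert (Hinv : 0 < / lam_dk lam kmax) by (apply Rinv_0_lt_compat; exact Hlm).
    unfold L. rewrite !rpow_of_pos by (try apply Rdiv_lt_0_compat; try apply Rpower_pos; lra).
    unfold Rdiv. rewrite <- Rpower_mult_distr, Rpower_mult by (try apply Rpower_pos; lra).
    f_equal; [f_equal; unfold s, Rdiv; field; lra |].
    unfold Rpower. rewrite ln_Rinv, <- exp_Ropp by exact Hlm. f_equal. ring. }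
  rewrite Hratio.
  apply Rle_trans with (/ L * (A * L + Rpower A s * z)).
  - apply Rmult_le_compat_l; [left; apply Rinv_0_lt_compat, HL | exact Hsum].
  - rewrite HAs. replace (/ L * (A * L + Rpower C s * Rpower (INR d) (q * s) * z))
      with (A + Rpower C s * z * (Rpower (INR d) (q * s) * / L)) by (field; lra).
    unfold A. lra.
Qed.

Theorem lemma3 (P : ptype) (I : nat -> nat -> Prop) (lam : nat -> R) (C p q : R)
  (HI : index_sets_ok I)
  (Hnonneg : forall m, (1 <= m)%nat -> 0 <= lam m)
  (Hdecr : forall m, (1 <= m)%nat -> lam (S m) <= lam m)
  (Hcompact : Un_cv lam 0)
  (Hlam2 : 0 < lam 2%nat)
  (Hinit : forall d, (1 <= d)%nat -> exists k, in_nabla P I d k /\ 0 < lam_dk lam k)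
  (Htract : poly_tractable_with P I lam C p q) :
  (forall tau, p / 2 < tau -> in_ell lam tau) /\
  (forall tau, p / 2 < tau ->
   forall (d : nat), (1 <= d)%nat ->
   forall kmax, in_nabla P I d kmax ->
     (forall k, in_nabla P I d k -> lam_dk lam k <= lam_dk lam kmax) ->
   forall z, is_zeta (2 * tau / p) z ->
   forall F : list (list nat), NoDup F -> (forall k, In k F -> in_nabla P I d k) ->
     / rpow (lam_dk lam kmax) tau * sumR (map (fun k => rpow (lam_dk lam k) tau) F)
     <= (1 + C) * Rpower (INR d) q
        + Rpower C (2 * tau / p) * z
          * rpow (Rpower (INR d) (2 * q / p) / lam_dk lam kmax) tau).
Proof.
  split.
  - intros tau Htau. exact (eigenvalues_in_ell P I lam C p q tau Hnonneg Hdecr Htract Htau).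
  - intros tau Htau d Hd kmax _ Hmax z Hz F HF HFn.
    assert (Hlm : 0 < lam_dk lam kmax).
    { destruct (Hinit d Hd) as [k0 [Hk0 Hpos]]. specialize (Hmax k0 Hk0). lra. }
    exact (normalized_sum_bound P I lam C p q tau d kmax z F
             Hnonneg Htract Htau Hd Hlm Hmax Hz HF HFn).
Qed.
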